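(* For any nontrivial connected graph $G$, $\gamma_t(G)\le \gamma_{qtR}(G)\le 2\gamma_t(G)$. Furthermore: (i) $\gamma_{qtR}(G)=\gamma_t(G)$ if and only if $G\cong P_2$; (ii) $\gamma_{qtR}(G)=\gamma_t(G)+1$ if and only if $\gamma_{qtR}(G)=3$; (iii) $\gamma_{qtR}(G)=2\gamma_t(G)$ if and only if $\gamma_{qtR}(G)=\gamma_{tR}(G)$ and $\gamma_{tR}(G)=2\gamma_t(G)$.
   Context: All graphs are finite, simple and undirected. $\gamma_t(G)$ is the total domination number: the minimum size of a set $S\subseteq V(G)$ such that every vertex of $G$ has a neighbor in $S$. For a function $f:V(G)\to\{0,1,2\}$ write $V_i=\{v: f(v)=i\}$; its weight is $|V_1|+2|V_2|$. A total Roman dominating function (TRDF) is an $f$ in which every vertex labeled $0$ has a neighbor labeled $2$ and the subgraph induced by $V_1\cup V_2$ has no isolated vertices; $\gamma_{tR}(G)$ is the minimum weight of a TRDF. A quasi-total Roman dominating function (QTRDF) is an $f$ such that every vertex labeled $0$ is adjacent to a vertex labeled $2$, and every vertex that is isolated in the subgraph induced by $V_1\cup V_2$ has label $1$; $\gamma_{qtR}(G)$ is the minimum weight of a QTRDF. *)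

From mathcomp Require Import all_boot.
Set Implicit Arguments. Unset Strict Implicit. Unset Printing Implicit Defensive.

Definition simple_graph (T : finType) (e : rel T) : Prop :=
  symmetric e /\ irreflexive e.

Definition nontrivial (T : finType) : Prop := 1 < #|T|.

Definition connected_graph (T : finType) (e : rel T) : Prop :=
  forall x y : T, connect e x y.

Definition graph_iso (T T' : finType) (e : rel T) (e' : rel T') : Prop :=
  exists f : T -> T', bijective f /\ forall x y, e' (f x) (f y) = e x y.

Definition path_rel (n : nat) : rel 'I_n :=
  fun i j => (i.+1 == j :> nat) || (j.+1 == i :> nat).

Arguments path_rel n : clear implicits.

Definition total_dominating (T : finType) (e : rel T) (S : {set T}) : bool :=
  [forall v, [exists u in S, e v u]].

(* gamma_t: minimum size of a total dominating set (the default #|T| is an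
   upper bound, attained by V(G) when G has no isolated vertex). *)
Definition gamma_t (T : finType) (e : rel T) : nat :=
  \big[minn/#|T|]_(S : {set T} | total_dominating e S) #|S|.

Definition labeling (T : finType) := {ffun T -> 'I_3}.

Definition weight (T : finType) (f : labeling T) : nat := \sum_(v : T) (f v : nat).

Definition roman_cond (T : finType) (e : rel T) (f : labeling T) : bool :=
  [forall v, ((f v : nat) == 0) ==> [exists u, e v u && ((f u : nat) == 2)]].

Definition isolated_in_pos (T : finType) (e : rel T) (f : labeling T) (v : T) : bool :=
  ((f v : nat) != 0) && ~~ [exists u, e v u && ((f u : nat) != 0)].

Definition is_TRDF (T : finType) (e : rel T) (f : labeling T) : bool :=
  roman_cond e f && [forall v, ~~ isolated_in_pos e f v].

Definition is_QTRDF (T : finType) (e : rel T) (f : labeling T) : bool :=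
  roman_cond e f && [forall v, isolated_in_pos e f v ==> ((f v : nat) == 1)].

(* Minimum weights; the default 2*#|T| is an upper bound (constant 2 labeling). *)
Definition gamma_tR (T : finType) (e : rel T) : nat :=
  \big[minn/(2 * #|T|)]_(f : labeling T | is_TRDF e f) weight f.

Definition gamma_qtR (T : finType) (e : rel T) : nat :=
  \big[minn/(2 * #|T|)]_(f : labeling T | is_QTRDF e f) weight f.

(* All upper bounds on gamma_t rest on one estimate: a set B together with one
   neighbour of each vertex not dominated by B is a total dominating set, so
   gamma_t <= |B| + #(vertices not dominated by B).
   For a QTRDF f, taking B = (V1 u V2) minus its isolated vertices (all labelled
   1) gives gamma_t <= |V1 u V2| <= w(f); labelling a minimum total dominating
   set by 2 gives a TRDF of weight 2 gamma_t. Hence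
   gamma_t <= gamma_qtR <= gamma_tR <= 2 gamma_t, which also yields (iii).
   For (i) and (ii) take a minimum QTRDF f, so gamma_qtR = |V1 u V2| + |V2| with
   gamma_t <= |V1 u V2|. If gamma_qtR <= gamma_t + 1 then |V2| <= 1. When V2 is
   empty, every vertex is labelled 1 and gamma_qtR = n, whereas some edge of a
   connected graph dominates 3 vertices if n >= 3 and 4 vertices if n >= 4.
   When V2 = {v}, the vertex v and a well-chosen neighbour dominate all vertices
   labelled 0 and three positive ones, so gamma_t < |V1 u V2| once
   |V1 u V2| >= 3. Either way gamma_t = 2 and n = 2 or gamma_qtR = 3. *)

From mathcomp Require Import all_boot order zify.
Set Implicit Arguments. Unset Strict Implicit. Unset Printing Implicit Defensive.
Import Order.TTheory.

Lemma path_rel2E (i j : 'I_2) : path_rel 2 i j = (i != j).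
Proof. by case: i j => [[|[|//]] ?] [[|[|//]] ?]. Qed.

Lemma exists_notin (T : finType) (A : {pred T}) : #|A| < #|T| -> exists z, z \notin A.
Proof.
rewrite -(cardC A) -[X in X < _]addn0 ltn_add2l => /card_gt0P [z].
by rewrite inE; exists z.
Qed.

Lemma graph_iso_card (T T' : finType) (e : rel T) (e' : rel T') :
  graph_iso e e' -> #|T| = #|T'|.
Proof. by case=> f [/bij_eq_card]. Qed.

Lemma connect_edge_out (T : finType) (e : rel T) (A : {pred T}) x y :
  connect e x y -> x \in A -> y \notin A -> exists a b, [/\ a \in A, b \notin A & e a b].
Proof.
case/connectP=> p + ->; elim: p x => [|z p IH] x /=; first by move=> _ ->.
case/andP=> exz pz xA; case: (boolP (z \in A)) => [zA|zA]; first exact: IH.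
by exists x, z.
Qed.

Lemma connected_no_isolated (T : finType) (e : rel T) :
  nontrivial T -> connected_graph e -> forall x, exists y, e x y.
Proof.
move=> ntT conn x.
have [y yx] : exists y, y \notin [set x] by apply: exists_notin; rewrite cards1.
have [a [b [/set1P -> _ exb]]] := connect_edge_out (conn x y) (set11 x) yx.
by exists b.
Qed.

Section TotalRomanDomination.
Variables (T : finType) (e : rel T).
Hypotheses (e_sym : symmetric e) (e_irr : irreflexive e).
Hypothesis no_isolated : forall x, exists y, e x y.
Hypothesis T_nontrivial : nontrivial T.
Implicit Types (f : labeling T) (S B X : {set T}).

Lemma adj_neq x y : e x y -> x != y.
Proof. by apply: contraTneq => ->; rewrite e_irr. Qed.

Definition dominated_by B : {set T} := [set x | [exists u in B, e x u]].

Lemma gamma_t_le_total_dominating S : total_dominating e S -> gamma_t e <= #|S|.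
Proof. exact: (@bigmin_le_cond _ nat). Qed.

Lemma total_dominating_setT : total_dominating e [set: T].
Proof.
apply/forallP => x; have [y exy] := no_isolated x.
by apply/existsP; exists y; rewrite in_setT.
Qed.

Lemma gamma_t_attained : exists2 S, total_dominating e S & gamma_t e = #|S|.
Proof.
have [S tS eqS] := @eq_bigmin _ nat _ #|T| _ (total_dominating e)
  (fun S : {set T} => #|S|) total_dominating_setT (fun S _ => max_card S).
by exists S.
Qed.

Lemma gamma_t_le_undominated B : gamma_t e <= #|B| + #|~: dominated_by B|.
Proof.
pose nb x := xchoose (no_isolated x).
apply: leq_trans (gamma_t_le_total_dominating (S := B :|: nb @: ~: dominated_by B) _) _.
  apply/forallP => x; case: (boolP (x \in dominated_by B)) => [|xU].
    rewrite inE => /existsP [u /andP [uB exu]].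
    by apply/existsP; exists u; rewrite exu inE uB.
  apply/existsP; exists (nb x).
  by rewrite (xchooseP (no_isolated x)) inE imset_f ?orbT // inE.
by rewrite (leq_trans (leq_card_setU _ _)) // leq_add2l leq_imset_card.
Qed.

Lemma gamma_t_le_dominating B X :
  X \subset dominated_by B -> gamma_t e + #|X| <= #|B| + #|T|.
Proof.
move=> XB; have /subset_leq_card : ~: dominated_by B \subset ~: X by rewrite setCS.
have := cardsC X; have := gamma_t_le_undominated B; lia.
Qed.

Lemma two_le_gamma_t : 2 <= gamma_t e.
Proof.
have [S /forallP tS ->] := gamma_t_attained.
have [x _] := card_gt1P T_nontrivial.
have /existsP [u /andP [uS _]] := tS x; have /existsP [w /andP [wS euw]] := tS u.
have sub : [set u; w] \subset S by apply/subsetP => z; rewrite !inE => /orP [] /eqP ->.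
by have := subset_leq_card sub; rewrite cards2 (adj_neq euw).
Qed.

Definition V12 (f : labeling T) : {set T} := [set x | (f x : nat) != 0].
Definition V2 (f : labeling T) : {set T} := [set x | (f x : nat) == 2].

Lemma weight_V12_V2 f : weight f = #|V12 f| + #|V2 f|.
Proof.
rewrite -!sum1_card [in RHS]big_mkcond [X in _ + X]big_mkcond -big_split /=.
by apply: eq_bigr => x _; rewrite !inE; case: (f x) => [[|[|[|]]] ].
Qed.

Lemma weight_le f : weight f <= 2 * #|T|.
Proof. by rewrite weight_V12_V2 mul2n -addnn leq_add ?max_card. Qed.

Definition lab_on (S : {set T}) (k : 'I_3) : labeling T :=
  [ffun x => if x \in S then k else ord0].

Lemma weight_lab_on S k : weight (lab_on S k) = #|S| * k.
Proof.
rewrite /weight (bigID [in S]) /= [X in _ + X]big1 => [|x /negbTE xS].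
  by rewrite addn0 -sum_nat_const; apply: eq_bigr => x xS; rewrite ffunE xS.
by rewrite ffunE xS.
Qed.

Lemma QTRDF_zero f x :
  is_QTRDF e f -> (f x : nat) = 0 -> exists2 u, e x u & (f u : nat) = 2.
Proof.
case/andP => /forallP /(_ x) /implyP roman _ fx.
by have /existsP [u /andP [exu /eqP fu]] := roman (introT eqP fx); exists u.
Qed.

Lemma QTRDF_two f x :
  is_QTRDF e f -> (f x : nat) = 2 -> exists2 u, e x u & (f u : nat) != 0.
Proof.
case/andP => _ /forallP /(_ x) /implyP iso fx.
case: (boolP (isolated_in_pos e f x)) => [/iso|]; first by rewrite fx.
by rewrite /isolated_in_pos fx negbK => /existsP [u /andP [exu fu]]; exists u.
Qed.

Lemma TRDF_QTRDF f : is_TRDF e f -> is_QTRDF e f.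
Proof.
case/andP => roman /forallP iso; rewrite /is_QTRDF roman.
by apply/forallP => x; rewrite (negbTE (iso x)).
Qed.

Lemma TRDF_lab_on S : total_dominating e S -> is_TRDF e (lab_on S ord_max).
Proof.
move=> /forallP tS; apply/andP; split; apply/forallP => x;
  have /existsP [u /andP [uS exu]] := tS x.
  by apply/implyP => _; apply/existsP; exists u; rewrite exu ffunE uS.
by apply/nandP; right; rewrite negbK; apply/existsP; exists u; rewrite exu ffunE uS.
Qed.

Lemma QTRDF_ones : is_QTRDF e (lab_on [set: T] (Ordinal (isT : 1 < 3))).
Proof. by apply/andP; split; apply/forallP => x; rewrite ffunE in_setT ?implybT. Qed.

Lemma gamma_qtR_le_weight f : is_QTRDF e f -> gamma_qtR e <= weight f.
Proof. exact: (@bigmin_le_cond _ nat). Qed.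

Lemma gamma_tR_le_weight f : is_TRDF e f -> gamma_tR e <= weight f.
Proof. exact: (@bigmin_le_cond _ nat). Qed.

Lemma gamma_qtR_attained : exists2 f, is_QTRDF e f & gamma_qtR e = weight f.
Proof.
have [f Qf eqf] := @eq_bigmin _ nat _ (2 * #|T|) _ (is_QTRDF e) (@weight T)
  QTRDF_ones (fun f _ => weight_le f).
by exists f.
Qed.

Lemma gamma_qtR_le_card : gamma_qtR e <= #|T|.
Proof.
by have := gamma_qtR_le_weight QTRDF_ones; rewrite weight_lab_on cardsT muln1.
Qed.

Lemma gamma_qtR_le_gamma_tR : gamma_qtR e <= gamma_tR e.
Proof.
apply: (@le_bigmin _ nat); first exact: (@bigmin_le_id _ nat).
by move=> f /TRDF_QTRDF /gamma_qtR_le_weight.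
Qed.

Lemma gamma_tR_le_double_gamma_t : gamma_tR e <= 2 * gamma_t e.
Proof.
have [S tS ->] := gamma_t_attained.
by have := gamma_tR_le_weight (TRDF_lab_on tS); rewrite weight_lab_on mulnC.
Qed.

Lemma gamma_t_le_V12 f : is_QTRDF e f -> gamma_t e <= #|V12 f|.
Proof.
move=> Qf; set I := [set x | isolated_in_pos e f x].
have iso1 x : isolated_in_pos e f x -> (f x : nat) = 1.
  by case/andP: Qf => _ /forallP /(_ x) /implyP iso /iso /eqP.
have IV : I \subset V12 f by apply/subsetP => x; rewrite !inE => /andP [].
(* A 2-neighbour is never isolated, and a positive neighbour of a
   non-isolated positive vertex is not isolated either. *)
have UI : ~: dominated_by (V12 f :\: I) \subset I.
  apply/subsetP => x; rewrite !inE; apply: contraR => xI; apply/existsP.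
  have [fx|fx] := eqVneq (f x : nat) 0.
    have [u exu fu] := QTRDF_zero Qf fx; exists u; rewrite exu !inE fu /= !andbT.
    by apply/negP => /iso1; rewrite fu.
  move: xI; rewrite /isolated_in_pos negb_and fx negbK => /existsP [u /andP [exu fu]].
  exists u; rewrite exu !inE fu !andbT /isolated_in_pos negb_and !negbK; apply/orP; right.
  by apply/existsP; exists x; rewrite e_sym exu.
have := gamma_t_le_undominated (V12 f :\: I); have := subset_leq_card UI.
by rewrite -(cardsID I (V12 f)) (setIidPr IV); lia.
Qed.

Lemma gamma_t_le_gamma_qtR : gamma_t e <= gamma_qtR e.
Proof.
have [f Qf ->] := gamma_qtR_attained.
by rewrite weight_V12_V2 (leq_trans (gamma_t_le_V12 Qf)) ?leq_addr.
Qed.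

Lemma V12_full f : is_QTRDF e f -> #|V2 f| = 0 -> #|V12 f| = #|T|.
Proof.
move=> Qf /eqP; rewrite cards_eq0 => /eqP V2f0.
suff -> : V12 f = [set: T] by rewrite cardsT.
apply/setP => x; rewrite !inE.
apply/negP => /eqP /(QTRDF_zero Qf) [u _ fu].
by have := in_set0 u; rewrite -V2f0 inE fu.
Qed.

Lemma card2_graph_iso : #|T| = 2 -> graph_iso e (path_rel 2).
Proof.
move=> T2; have eE a b : e a b = (a != b).
  have [->|ab] := eqVneq a b; first by rewrite e_irr.
  have [u eau] := no_isolated a.
  suff /eqP <- : u == b by [].
  apply/negPn/negP => ub; have := max_card [set x in [:: a; b; u]].
  by rewrite cardsE (card_uniqP _) ?T2 //= !inE negb_or ab (adj_neq eau) eq_sym ub.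
exists (cast_ord T2 \o enum_rank); split.
  apply: bij_comp; last exact: enum_rank_bij.
  exact: (Bijective (cast_ordK T2) (cast_ordKV T2)).
move=> a b; rewrite path_rel2E eE.
by rewrite (inj_eq (inj_comp (@cast_ord_inj _ _ T2) enum_rank_inj)).
Qed.

Hypothesis e_conn : connected_graph e.

Lemma exists_cherry :
  3 <= #|T| -> exists v w p, [/\ e v w, e v p & uniq [:: v; w; p]].
Proof.
move=> n3; have [x _] := card_gt1P T_nontrivial.
have [y exy] := no_isolated x.
have [z zxy] : exists z, z \notin [set x; y].
  by apply: exists_notin; apply: leq_trans n3; rewrite cards2; case: (_ != _).
have [a [b [/set2P [->|->] bxy eab]]] := connect_edge_out (e_conn x z) (set21 x y) zxy.
  exists x, y, b; rewrite /= !inE negb_or (adj_neq exy) (adj_neq eab) /=.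
  by split=> //; rewrite andbT; apply: contraNneq bxy => ->; rewrite set22.
have eyx : e y x by rewrite e_sym.
exists y, x, b; rewrite /= !inE negb_or (adj_neq eyx) (adj_neq eab) /=.
by split=> //; rewrite andbT; apply: contraNneq bxy => ->; rewrite set21.
Qed.

Lemma gamma_t_lt_card : 3 <= #|T| -> gamma_t e < #|T|.
Proof.
move=> /exists_cherry [v [w [p [evw evp vwp]]]].
have X3 : #|[set x in [:: v; w; p]]| = 3 by rewrite cardsE (card_uniqP vwp).
have dom : [set x in [:: v; w; p]] \subset dominated_by [set v; w].
  apply/subsetP => x; rewrite !inE => /or3P [] /eqP ->; apply/existsP;
    [exists w | exists v | exists v]; by rewrite !inE eqxx ?orbT // e_sym.
by have := gamma_t_le_dominating dom; rewrite X3 cards2 (adj_neq evw); lia.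
Qed.

Lemma gamma_t_add2_le_card : 4 <= #|T| -> gamma_t e + 2 <= #|T|.
Proof.
move=> n4; have [v [w [p [evw evp vwp]]]] := exists_cherry (ltnW n4).
set X := [set x in [:: v; w; p]].
have X3 : #|X| = 3 by rewrite cardsE (card_uniqP vwp).
have [z zX] : exists z, z \notin X by apply: exists_notin; rewrite X3.
have vX : v \in X by rewrite inE mem_head.
have [a [b [aX bX eab]]] := connect_edge_out (e_conn v z) vX zX.
(* A neighbour u of v with a \in [set v; u]. *)
pose u := if a == v then w else a.
have evu : e v u.
  rewrite /u; case: ifP => // /negbT av.
  by move: aX; rewrite !inE (negbTE av) => /or3P [] // /eqP ->.
have dom : b |: X \subset dominated_by [set v; u].
  apply/subsetP => x; rewrite !inE => /or4P [] /eqP ->; apply/existsP.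
  - exists a; rewrite e_sym eab !inE andbT /u.
    by case: eqP => [->|_]; rewrite ?eqxx ?orbT.
  - by exists u; rewrite evu !inE eqxx orbT.
  - by exists v; rewrite e_sym evw !inE eqxx.
  - by exists v; rewrite e_sym evp !inE eqxx.
by have := gamma_t_le_dominating dom; rewrite cardsU1 bX X3 cards2; case: (v != u); lia.
Qed.

Lemma gamma_t_lt_V12 f :
  is_QTRDF e f -> #|V2 f| = 1 -> 3 <= #|V12 f| -> gamma_t e < #|V12 f|.
Proof.
move=> Qf /eqP /cards1P [v V2v] V3.
have two_v x : (f x : nat) = 2 -> x = v by move=> fx; apply/set1P; rewrite -V2v inE fx.
have zero_v x : (f x : nat) = 0 -> e x v.
  by move=> /(QTRDF_zero Qf) [u exu /two_v <-].
have /[!inE] /eqP fv : v \in V2 f by rewrite V2v set11.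
have [c evc fc] := QTRDF_two Qf fv.
set R := V12 f :\ v :\ c.
have R_card : #|V12 f| = #|R| + 2.
  rewrite (cardsD1 v) (cardsD1 c (V12 f :\ v)) !inE fv fc andbT.
  by rewrite (eq_sym c) (adj_neq evc) addn2.
have [r rR] : exists r, r \in R by apply/card_gt0P; lia.
have vR : v \notin R by rewrite !inE eqxx andbF.
have [a [b [aR bR eab]]] := connect_edge_out (e_conn r v) rR vR.
(* If b is positive then b \in [set v; c]; otherwise b is a 0-vertex, hence
   adjacent to v. Either way [set v; u] dominates a. *)
pose u := if (f b : nat) == 0 then b else c.
have evu : e v u by rewrite /u; case: ifP => [/eqP /zero_v|_]; rewrite // e_sym.
have dom : a |: ~: R \subset dominated_by [set v; u].
  apply/subsetP => x; rewrite !inE => /orP [/eqP ->|].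
    rewrite /u; apply/existsP; case: ifP => [_|fb0].
      by exists b; rewrite eab !inE eqxx orbT.
    move: bR; rewrite !inE !negb_and !negbK => /or3P [/eqP bc|/eqP bv|].
    - by exists c; rewrite -bc eab !inE bc eqxx orbT.
    - by exists v; rewrite -bv eab !inE eqxx.
    - by rewrite fb0.
  rewrite !negb_and !negbK => /or3P [/eqP ->|/eqP ->|/eqP /zero_v exv]; apply/existsP.
  - by exists v; rewrite e_sym evc !inE eqxx.
  - by exists u; rewrite evu !inE eqxx orbT.
  - by exists v; rewrite exv !inE eqxx.
have := gamma_t_le_dominating dom; have := cardsC R.
by rewrite cardsU1 in_setC aR cards2 R_card; case: (v != u); lia.
Qed.

Lemma gamma_qtR_le_succ_gamma_t :
  gamma_qtR e <= (gamma_t e).+1 -> gamma_t e = 2 /\ (#|T| = 2 \/ gamma_qtR e = 3).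
Proof.
move=> le_qt; have [f Qf] := gamma_qtR_attained; rewrite weight_V12_V2 => eqf.
have tV := gamma_t_le_V12 Qf; have t2 := two_le_gamma_t.
have [V2f0|V2f1] : #|V2 f| = 0 \/ #|V2 f| = 1 by lia.
  have := V12_full Qf V2f0; have := gamma_t_lt_card; have := gamma_t_add2_le_card; lia.
have := gamma_t_lt_V12 Qf V2f1; lia.
Qed.

End TotalRomanDomination.

Theorem mainTheorem2 (T : finType) (e : rel T) :
  simple_graph e -> nontrivial T -> connected_graph e ->
  [/\ gamma_t e <= gamma_qtR e <= 2 * gamma_t e,
      gamma_qtR e = gamma_t e <-> graph_iso e (path_rel 2),
      gamma_qtR e = (gamma_t e).+1 <-> gamma_qtR e = 3
    & gamma_qtR e = 2 * gamma_t e <->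
        (gamma_qtR e = gamma_tR e /\ gamma_tR e = 2 * gamma_t e)].
Proof.
move=> [e_sym e_irr] T_nontrivial e_conn.
have no_isolated := connected_no_isolated T_nontrivial e_conn.
have t_qtR := gamma_t_le_gamma_qtR e_sym no_isolated.
have qtR_tR := gamma_qtR_le_gamma_tR e.
have tR_t := gamma_tR_le_double_gamma_t no_isolated.
have two_t := two_le_gamma_t e_irr no_isolated T_nontrivial.
have qtR_n := gamma_qtR_le_card e.
have small := gamma_qtR_le_succ_gamma_t e_sym e_irr no_isolated T_nontrivial e_conn.
split.
- by rewrite t_qtR (leq_trans qtR_tR tR_t).
- split=> [qtR_eq_t|/graph_iso_card]; last by rewrite card_ord; lia.
  by apply: card2_graph_iso e_irr no_isolated _; lia.
- by split; lia.
- by split; lia.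
Qed.
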